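(* For all integers $n$ and $\alpha$ with $n<\alpha\le 2^{n-1}+1$, there exists a minimal $n$-state nondeterministic finite automaton accepting a prefix-free language whose equivalent minimal deterministic finite automaton has exactly $\alpha$ states. The same holds with ''prefix-free'' replaced by ''suffix-free''.
   Context: NFAs have a single initial state and a transition function $\delta:Q\times\Sigma\to 2^Q$ that may map to the empty set (no sink state is needed or counted); DFAs are complete, so a sink state is counted. A minimal $n$-state NFA is an NFA with $n$ states such that no NFA with fewer states accepts the same language. With $\Sigma^+=\Sigma^*\setminus\{\lambda\}$: $L$ is prefix-free if $y\in L$ implies $yz\notin L$ for all $z\in\Sigma^+$; suffix-free if $y\in L$ implies $xy\notin L$ for all $x\in\Sigma^+$. *)

From mathcomp Require Import all_boot.
Set Implicit Arguments. Unset Strict Implicit. Unset Printing Implicit Defensive.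

Definition lang (Sigma : finType) := seq Sigma -> bool.

Definition prefix_free (Sigma : finType) (L : lang Sigma) : Prop :=
  forall y z : seq Sigma, L y -> z != [::] -> ~~ L (y ++ z).

Definition suffix_free (Sigma : finType) (L : lang Sigma) : Prop :=
  forall x y : seq Sigma, L y -> x != [::] -> ~~ L (x ++ y).

Record nfa (Sigma Q : finType) := NFA {
  nfa_init : Q;
  nfa_delta : Q -> Sigma -> {set Q};
  nfa_final : {set Q} }.

Definition nfa_reach (Sigma Q : finType) (A : nfa Sigma Q) (S : {set Q})
  (w : seq Sigma) : {set Q} :=
  foldl (fun (S : {set Q}) (a : Sigma) => \bigcup_(q in S) nfa_delta A q a) S w.

Definition nfa_accept (Sigma Q : finType) (A : nfa Sigma Q) : lang Sigma :=
  fun w => [exists q in nfa_final A, q \in nfa_reach A [set nfa_init A] w].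

Definition minimal_nfa (Sigma Q : finType) (A : nfa Sigma Q) : Prop :=
  forall (Q' : finType) (B : nfa Sigma Q'),
    #|Q'| < #|Q| -> ~ (nfa_accept B =1 nfa_accept A).

(* Complete DFA (a sink state, if any, is an ordinary state and is counted). *)
Record dfa (Sigma Q : finType) := DFA {
  dfa_init : Q;
  dfa_delta : Q -> Sigma -> Q;
  dfa_final : {set Q} }.

Definition dfa_accept (Sigma Q : finType) (D : dfa Sigma Q) : lang Sigma :=
  fun w => foldl (dfa_delta D) (dfa_init D) w \in dfa_final D.

Definition min_dfa_size (Sigma : finType) (L : lang Sigma) (k : nat) : Prop :=
  (exists (Q : finType) (D : dfa Sigma Q), #|Q| = k /\ dfa_accept D =1 L) /\
  (forall (Q : finType) (D : dfa Sigma Q), dfa_accept D =1 L -> k <= #|Q|).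

From mathcomp Require Import all_boot zify.
Set Implicit Arguments. Unset Strict Implicit. Unset Printing Implicit Defensive.

(* The witness has states 0..m, initial state 0, final state m, and two kinds of letters:
   a letter T, for T in a family C of subsets, leads from 0 to every state of T, and a
   letter i leads from i to m.  The subsets reachable by the subset construction are
   exactly the members of C together with one extra singleton {e}, and a letter i tests
   whether i belongs to the current subset, so the minimal DFA has #|C| + 1 states.
   Families of subsets avoiding e that contain the empty set and every other singleton
   exist with any size between n and 2^(n-1), which covers every alpha.  The same tests form a fooling
   set of size n, so the NFA is minimal.  The state e is excluded from every member of C
   and carries no letter i: for e = m the final state is a dead end, which makes the
   language prefix-free; for e = 0 the initial state is never re-entered and every
   accepted word starts with a set letter, which makes it suffix-free. *)

Section NfaReach.
Variables (Sigma Q : finType) (A : nfa Sigma Q).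

Definition nfa_accept_from (S : {set Q}) (w : seq Sigma) : bool :=
  [exists q in nfa_final A, q \in nfa_reach A S w].

Lemma nfa_reach_cat S u v : nfa_reach A S (u ++ v) = nfa_reach A (nfa_reach A S u) v.
Proof. by rewrite /nfa_reach foldl_cat. Qed.

Lemma nfa_reach_cons S a w :
  nfa_reach A S (a :: w) = nfa_reach A (nfa_reach A S [:: a]) w.
Proof. by []. Qed.

Lemma nfa_reach1 S a : nfa_reach A S [:: a] = \bigcup_(q in S) nfa_delta A q a.
Proof. by []. Qed.

Lemma nfa_reach_set0 w : nfa_reach A set0 w = set0.
Proof. elim: w => [|a w IHw] //; rewrite nfa_reach_cons nfa_reach1 big_set0; exact: IHw. Qed.

Lemma nfa_reachS (S S' : {set Q}) w : S \subset S' -> nfa_reach A S w \subset nfa_reach A S' w.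
Proof.
elim: w S S' => [|a w IHw] S S' sSS'; first exact: sSS'.
apply: IHw; apply/bigcupsP => q qS.
by rewrite (bigcup_max q) ?(subsetP sSS').
Qed.

Lemma nfa_reach_from_state (S : {set Q}) w p :
  p \in nfa_reach A S w -> exists2 q, q \in S & p \in nfa_reach A [set q] w.
Proof.
elim: w S p => [|a w IHw] S p; first by exists p; rewrite ?set11.
rewrite nfa_reach_cons => /IHw [r]; rewrite nfa_reach1 => /bigcupP [q qS rq] pr.
exists q => //; rewrite nfa_reach_cons; apply: subsetP pr; apply: nfa_reachS.
by rewrite sub1set nfa_reach1; apply/bigcupP; exists q; rewrite ?set11.
Qed.

Lemma nfa_accept_fromS (S S' : {set Q}) w :
  S \subset S' -> nfa_accept_from S w -> nfa_accept_from S' w.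
Proof.
move=> sSS' /existsP [q /andP [qF qS]]; apply/existsP; exists q.
by rewrite qF (subsetP (nfa_reachS w sSS')).
Qed.

Lemma nfa_accept_cat u v :
  nfa_accept A (u ++ v) = nfa_accept_from (nfa_reach A [set nfa_init A] u) v.
Proof. by rewrite /nfa_accept /nfa_accept_from nfa_reach_cat. Qed.

End NfaReach.

Lemma fooling_set_minimal_nfa (Sigma Q : finType) (A : nfa Sigma Q) (x y : Q -> seq Sigma) :
  (forall p q, nfa_accept A (x p ++ y q) = (p == q)) -> minimal_nfa A.
Proof.
move=> fool Q' B ltQ' eqBA.
have midP p : exists q', (q' \in nfa_reach B [set nfa_init B] (x p))
                         && nfa_accept_from B [set q'] (y p).
  have := fool p p; rewrite eqxx -eqBA nfa_accept_cat => /existsP [r /andP [rF]].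
  case/nfa_reach_from_state => q' q'_in r_in.
  by exists q'; rewrite q'_in; apply/existsP; exists r; rewrite rF.
pose mid p := xchoose (midP p).
suff /leq_card : injective mid by rewrite leqNgt ltQ'.
move=> p p' eq_mid; apply/eqP; rewrite eq_sym -fool -eqBA nfa_accept_cat.
have /andP [_ acc_p] := xchooseP (midP p).
have /andP [mid_p' _] := xchooseP (midP p').
by apply: nfa_accept_fromS acc_p; rewrite sub1set -/(mid p) eq_mid.
Qed.

Section SubsetConstruction.
Variables (Sigma Q : finType) (A : nfa Sigma Q) (R : {set {set Q}}).

Lemma dfa_of_closed_family :
  [set nfa_init A] \in R -> (forall S a, S \in R -> nfa_reach A S [:: a] \in R) ->
  exists (Q' : finType) (D : dfa Sigma Q'), #|Q'| = #|R| /\ dfa_accept D =1 nfa_accept A.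
Proof.
move=> init_R closed_R; pose inR (S : {set Q}) := S \in R; pose T := {S | inR S}.
pose delta (s : T) a : T := exist inR _ (closed_R (val s) a (valP s)).
exists T, (DFA (exist inR _ init_R) delta [set s : T | nfa_accept_from A (val s) [::]]).
split; first by rewrite card_sig; apply: eq_card => S; rewrite inE.
have run w (s : T) : val (foldl delta s w) = nfa_reach A (val s) w.
  by elim: w s => [|a w IHw] s //=; rewrite IHw.
by move=> w; rewrite /dfa_accept /= inE run.
Qed.

Lemma card_reachable_distinguishable_leq (Q' : finType) (D : dfa Sigma Q') :
  (forall S, S \in R -> exists w, nfa_reach A [set nfa_init A] w = S) ->
  {in R &, forall S S', nfa_accept_from A S =1 nfa_accept_from A S' -> S = S'} ->
  dfa_accept D =1 nfa_accept A -> #|R| <= #|Q'|.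
Proof.
move=> reach_R dist_R eqDA; pose T := {S : {set Q} | S \in R}.
have word_ex (s : T) : exists w, nfa_reach A [set nfa_init A] w == val s.
  by have [w <-] := reach_R _ (valP s); exists w.
pose word s := xchoose (word_ex s).
have wordP s : nfa_reach A [set nfa_init A] (word s) = val s.
  exact/eqP/(xchooseP (word_ex s)).
pose g s := foldl (dfa_delta D) (dfa_init D) (word s).
have /leq_card : injective g.
  move=> s s' eq_g; apply/val_inj/dist_R; rewrite ?(valP s) ?(valP s') // => z.
  by rewrite -wordP -(wordP s') -!nfa_accept_cat -!eqDA /dfa_accept !foldl_cat -/(g s) eq_g.
by rewrite card_sig (eq_card (B := R)) // => S; rewrite inE.
Qed.

End SubsetConstruction.

Lemma card_between (X : finType) (A B : {set X}) k :
  A \subset B -> #|A| <= k <= #|B| ->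
  exists C : {set X}, [/\ A \subset C, C \subset B & #|C| = k].
Proof.
move=> sAB; elim: k => [|k IHk] /andP [leAk lekB].
  by exists A; split => //; apply/eqP; rewrite -leqn0.
have [ltAk|gtAk|eqAk] := ltngtP #|A| k.+1; last by exists A.
- have [C [sAC sCB cardC]] : exists C : {set X}, [/\ A \subset C, C \subset B & #|C| = k].
    by apply: IHk; rewrite -ltnS ltAk ltnW.
  have /properP [_ [x xB xNC]] : C \proper B by rewrite properEcard sCB cardC.
  exists (x |: C); split; first exact: subset_trans sAC (subsetUr _ _).
    by rewrite subUset sub1set xB.
  by rewrite cardsU1 xNC cardC.
- by rewrite ltnNge leAk in gtAk.
Qed.

Lemma family_avoiding_of_card (X : finType) (e : X) k :
  #|X| <= k <= 2 ^ #|X|.-1 ->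
  exists C : {set {set X}}, [/\ forall T, T \in C -> e \notin T, set0 \in C,
    forall q, q != e -> [set q] \in C & #|C| = k].
Proof.
move=> k_range; pose base := set0 |: [set [set q] | q in [set~ e]].
have base_sub : base \subset powerset [set~ e].
  apply/subsetP => T; rewrite !inE => /orP [/eqP ->|/imsetP [q qNe ->]].
    by rewrite sub0set.
  by rewrite sub1set.
have card_base : #|base| = #|X|.
  rewrite cardsU1 card_imset; last exact: set1_inj.
  have -> : set0 \notin [set [set q] | q in [set~ e]].
    by apply/imsetP => -[q _ /setP /(_ q)]; rewrite !inE eqxx.
  by rewrite cardsC1 add1n prednK //; apply/card_gt0P; exists e.
have base_range : #|base| <= k <= #|powerset [set~ e]|.
  by rewrite card_base card_powerset cardsC1.
have [C [sBC sCP cardC]] := card_between base_sub base_range.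
exists C; split => //.
- move=> T /(subsetP sCP); rewrite powersetE => /subsetP sTe.
  by apply/negP => /sTe; rewrite !inE eqxx.
- by apply: (subsetP sBC); rewrite !inE eqxx.
- by move=> q qNe; apply: (subsetP sBC); rewrite !inE imset_f ?orbT // !inE.
Qed.

Lemma bigcup_if_eq (X : finType) (S : {set X}) p b (Y : {set X}) :
  \bigcup_(q in S) (if (q == p) && b then Y else set0) = if (p \in S) && b then Y else set0.
Proof.
apply/setP => x; apply/bigcupP/idP => [[q qS]|].
  by case: eqP => [<-|_]; rewrite ?qS // in_set0.
by case: ifP => [/andP [pS ->] xY|_]; [exists p; rewrite ?eqxx | rewrite in_set0].
Qed.

Lemma eq_ord_of_ord0_max m (x y : 'I_m.+1) : ord0 = ord_max :> 'I_m.+1 -> x = y.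
Proof. by move=> /(congr1 val) /= m0; subst m; rewrite (ord1 x) (ord1 y). Qed.

Section Witness.
Variables (m : nat) (e : 'I_m.+1) (C : {set {set 'I_m.+1}}).
Hypothesis e_end : (e == ord0) || (e == ord_max).
Hypothesis C_avoids_e : forall T, T \in C -> e \notin T.
Hypothesis set0_in_C : set0 \in C.
Hypothesis set1_in_C : forall q, q != e -> [set q] \in C.

Definition witness_letter := ({set 'I_m.+1} + 'I_m.+1)%type.

Definition witness_delta (q : 'I_m.+1) (a : witness_letter) : {set 'I_m.+1} :=
  match a with
  | inl T => if (q == ord0) && (T \in C) then T else set0
  | inr i => if (q == i) && (i != e) then [set ord_max] else set0
  end.

Definition witness_nfa := @NFA witness_letter _ ord0 witness_delta [set ord_max].

Lemma witness_reach_set S T :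
  nfa_reach witness_nfa S [:: inl T] = if (ord0 \in S) && (T \in C) then T else set0.
Proof. exact: bigcup_if_eq. Qed.

Lemma witness_reach_state S i :
  nfa_reach witness_nfa S [:: inr i] = if (i \in S) && (i != e) then [set ord_max] else set0.
Proof. exact: bigcup_if_eq. Qed.

Lemma witness_accept_from S w :
  nfa_accept_from witness_nfa S w = (ord_max \in nfa_reach witness_nfa S w).
Proof.
apply/existsP/idP => [[q /andP [/set1P -> //]]|max_in].
by exists ord_max; rewrite inE eqxx.
Qed.

Lemma witness_accept w :
  nfa_accept witness_nfa w = (ord_max \in nfa_reach witness_nfa [set ord0] w).
Proof. exact: witness_accept_from. Qed.

Definition witness_states := [set e] |: C.

Lemma set1_in_witness_states q : [set q] \in witness_states.
Proof. by rewrite !inE; case: (eqVneq q e) => [->|/set1_in_C ->]; rewrite ?eqxx ?orbT. Qed.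

Lemma witness_states_closed S a :
  S \in witness_states -> nfa_reach witness_nfa S [:: a] \in witness_states.
Proof.
move=> _; case: a => [T|i]; rewrite (witness_reach_set, witness_reach_state).
  by case: ifP => [/andP [_ TC]|_]; rewrite !inE ?TC ?set0_in_C orbT.
by case: ifP => _; rewrite ?set1_in_witness_states // !inE set0_in_C orbT.
Qed.

Lemma witness_reach_states w : nfa_reach witness_nfa [set ord0] w \in witness_states.
Proof.
have : [set ord0] \in witness_states := set1_in_witness_states ord0.
elim: w [set ord0] => [|a w IHw] S // S_in.
by rewrite nfa_reach_cons; apply/IHw/witness_states_closed.
Qed.

Lemma witness_states_reachable S :
  S \in witness_states -> exists w, nfa_reach witness_nfa [set ord0] w = S.
Proof.
rewrite !inE; case: eqP => [->|_ /= SC]; last first.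
  by exists [:: inl S]; rewrite witness_reach_set set11 SC.
case: (eqVneq e ord0) => [->|e_ne0]; first by exists [::].
have e_max : e = ord_max by apply/eqP; move: e_end; rewrite (negbTE e_ne0).
by exists [:: inr ord0]; rewrite witness_reach_state set11 eq_sym e_ne0 e_max.
Qed.

Definition witness_test (q : 'I_m.+1) : seq witness_letter :=
  if q != e then [:: inr q] else if e == ord_max then [::] else [:: inl [set ord_max]].

Lemma witness_testP q S : nfa_accept_from witness_nfa S (witness_test q) = (q \in S).
Proof.
rewrite witness_accept_from /witness_test; case: (eqVneq q e) => [->|q_ne_e]; last first.
  by rewrite witness_reach_state q_ne_e andbT; case: (q \in S); rewrite inE ?eqxx.
case: (eqVneq e ord_max) => [-> //|e_ne_max].
have e0 : e = ord0 by apply/eqP; move: e_end; rewrite (negbTE e_ne_max) orbF.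
rewrite witness_reach_set set1_in_C 1?eq_sym // andbT e0.
by case: (ord0 \in S); rewrite inE ?eqxx.
Qed.

Lemma witness_states_distinguishable :
  {in witness_states &, forall S S',
    nfa_accept_from witness_nfa S =1 nfa_accept_from witness_nfa S' -> S = S'}.
Proof. by move=> S S' _ _ eqSS'; apply/setP => q; rewrite -!witness_testP. Qed.

Lemma witness_min_dfa_size : min_dfa_size (nfa_accept witness_nfa) #|C|.+1.
Proof.
have card_states : #|witness_states| = #|C|.+1.
  by rewrite cardsU1; case: (boolP ([set e] \in C)) => // /C_avoids_e; rewrite set11.
rewrite -card_states; split.
  apply: dfa_of_closed_family; [exact: set1_in_witness_states | exact: witness_states_closed].
move=> Q D; apply: card_reachable_distinguishable_leq.
  exact: witness_states_reachable.
exact: witness_states_distinguishable.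
Qed.

Lemma witness_reach_set1 p :
  exists w, nfa_reach witness_nfa [set nfa_init witness_nfa] w == [set p].
Proof. by have [w <-] := witness_states_reachable (set1_in_witness_states p); exists w. Qed.

Definition witness_word p := xchoose (witness_reach_set1 p).

Lemma witness_fooling p q : nfa_accept witness_nfa (witness_word p ++ witness_test q) = (p == q).
Proof.
rewrite nfa_accept_cat (eqP (xchooseP (witness_reach_set1 p))) witness_testP in_set1.
exact: eq_sym.
Qed.

Lemma witness_minimal : minimal_nfa witness_nfa.
Proof. exact: fooling_set_minimal_nfa witness_fooling. Qed.

Lemma witness_final_dead a : e = ord_max -> nfa_reach witness_nfa [set ord_max] [:: a] = set0.
Proof.
move=> e_max; case: a => [T|i]; last by rewrite witness_reach_state in_set1 -e_max andbN.
rewrite witness_reach_set in_set1; case: ifP => // /andP [/eqP ord0_max TC].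
apply/setP => x; rewrite inE; apply/negbTE.
by rewrite (eq_ord_of_ord0_max x e ord0_max); exact: C_avoids_e.
Qed.

Lemma witness_prefix_free : e = ord_max -> prefix_free (nfa_accept witness_nfa).
Proof.
move=> e_max y [//|a z] y_acc _; rewrite nfa_accept_cat.
have reach_y : nfa_reach witness_nfa [set ord0] y = [set ord_max].
  have := witness_reach_states y; rewrite !inE -e_max => /orP [/eqP //|yC].
  by move: (C_avoids_e yC); rewrite e_max -witness_accept y_acc.
by rewrite witness_accept_from reach_y nfa_reach_cons witness_final_dead // nfa_reach_set0 inE.
Qed.

Lemma ord0_notin_witness_reach S w :
  e = ord0 -> w != [::] -> ord0 \notin nfa_reach witness_nfa S w.
Proof.
move=> e0; case/lastP: w => [//|w a] _; rewrite -cats1 nfa_reach_cat.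
case: a => [T|i]; rewrite (witness_reach_set, witness_reach_state).
  by case: ifP => [/andP [_ /C_avoids_e]|_]; rewrite -?e0 ?inE.
case: ifP => [/andP [_ i_ne0]|_]; rewrite inE //.
by apply: contra i_ne0 => /eqP /(eq_ord_of_ord0_max i e) ->.
Qed.

Lemma witness_suffix_free : e = ord0 -> suffix_free (nfa_accept witness_nfa).
Proof.
move=> e0 x y y_acc x_ne0; rewrite nfa_accept_cat witness_accept_from.
have := ord0_notin_witness_reach [set nfa_init witness_nfa] e0 x_ne0.
move: (nfa_reach _ _ x) => S S_no0.
case: y y_acc => [|[T|i] y]; rewrite witness_accept => y_acc.
- by move: y_acc; rewrite in_set1 => /eqP ->.
- by rewrite nfa_reach_cons witness_reach_set (negbTE S_no0) nfa_reach_set0 inE.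
- move: y_acc; rewrite nfa_reach_cons witness_reach_state in_set1 e0 andbN.
  by rewrite nfa_reach_set0 inE.
Qed.

End Witness.

Lemma exists_witness_nfa m (e : 'I_m.+1) alpha
    (P : forall Sigma : finType, lang Sigma -> Prop) :
  (e == ord0) || (e == ord_max) -> m.+1 < alpha <= 2 ^ m + 1 ->
  (forall C : {set {set 'I_m.+1}}, (forall T, T \in C -> e \notin T) -> set0 \in C ->
     (forall q, q != e -> [set q] \in C) -> P _ (nfa_accept (witness_nfa e C))) ->
  exists (Sigma Q : finType) (A : nfa Sigma Q),
    #|Q| = m.+1 /\ minimal_nfa A /\ P _ (nfa_accept A) /\ min_dfa_size (nfa_accept A) alpha.
Proof.
move=> e_end alpha_range PC.
have /(family_avoiding_of_card e) [C [C_avoids_e set0_in_C set1_in_C cardC]] :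
    #|'I_m.+1| <= alpha.-1 <= 2 ^ #|'I_m.+1|.-1.
  by rewrite card_ord /=; lia.
exists _, _, (witness_nfa e C); rewrite card_ord; split=> //; split.
  exact: witness_minimal.
split; first exact: PC.
have -> : alpha = #|C|.+1 by lia.
exact: witness_min_dfa_size.
Qed.

Theorem mainTheorem5 :
  forall n alpha : nat, 1 <= n -> n < alpha <= 2 ^ (n - 1) + 1 ->
    (exists (Sigma Q : finType) (A : nfa Sigma Q),
        #|Q| = n /\ minimal_nfa A /\ prefix_free (nfa_accept A) /\
        min_dfa_size (nfa_accept A) alpha) /\
    (exists (Sigma Q : finType) (A : nfa Sigma Q),
        #|Q| = n /\ minimal_nfa A /\ suffix_free (nfa_accept A) /\
        min_dfa_size (nfa_accept A) alpha).
Proof.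
case=> [//|m] alpha _; rewrite subSS subn0 => alpha_range; split.
- apply: (@exists_witness_nfa _ ord_max _ (@prefix_free) _ alpha_range).
    by rewrite eqxx orbT.
  by move=> C *; apply: witness_prefix_free.
- apply: (@exists_witness_nfa _ ord0 _ (@suffix_free) _ alpha_range).
    by rewrite eqxx.
  by move=> C *; apply: witness_suffix_free.
Qed.
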